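(* For a solution as in the setting on $S^1\times(R_s,R_i]$ with $0<R_s<R_i$, define $\tilde{\mathcal{E}}(R)=\mathcal{E}(R)+\int_{S^1}\frac{e^{2\beta}K^2}{4\sqrt\alpha\,R^4}\,d\theta$. Then $$\frac{d\tilde{\mathcal{E}}}{dR}=-\int_{S^1}\left(\frac{e^{2\beta}K^2}{\sqrt\alpha\,R^5}+\frac{2U_R^2}{\sqrt\alpha\,R}+\frac{\sqrt\alpha\,e^{4U}A_\theta^2}{2R^3}\right)d\theta\le 0,$$ and for every $R_k\in(R_s,R_i]$, $\tilde{\mathcal{E}}(R_k)\le\tilde{\mathcal{E}}(R_i)\,(R_i/R_k)^4$.
   Context: Setting. A smooth vacuum $T^2$ symmetric spacetime in areal coordinates $(\theta,x,y,R)$, $\theta\in S^1=\mathbb{R}/\mathbb{Z}$, with metric $g=e^{2(\nu-U)}(-\alpha\,dR^2+d\theta^2)+e^{2U}[dx+A\,dy+(G+AH)\,d\theta]^2+e^{-2U}R^2(dy+H\,d\theta)^2$, where $\alpha>0,\nu,U,A,G,H$ are smooth functions of $(\theta,R)$ only, periodic in $\theta$; $K\ge0$ is the constant twist, the other twist vanishing; $\beta=\nu+\tfrac12\ln\alpha$. The vacuum equations are: $\beta_R=\sqrt{\alpha}Rh-\frac{e^{2\beta}K^2}{4R^3}$, $\beta_\theta=2R\big(U_RU_\theta+\frac{e^{4U}}{4R^2}A_RA_\theta\big)$, $\alpha_R=-\frac{\alpha e^{2\beta}K^2}{R^3}$, $U_{RR}-\alpha U_{\theta\theta}=-\frac{U_R}{R}+\frac{\alpha_RU_R}{2\alpha}+\frac{\alpha_\theta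 U_\theta}{2}+\frac{e^{4U}}{2R^2}(A_R^2-\alpha A_\theta^2)$, $A_{RR}-\alpha A_{\theta\theta}=\frac{A_R}{R}+\frac{\alpha_RA_R}{2\alpha}+\frac{\alpha_\theta A_\theta}{2}-4A_RU_R+4\alpha A_\theta U_\theta$, $G_R=-AH_R$, $H_R=\frac{e^{2\beta}K}{\sqrt{\alpha}R^3}$, with $h=\frac{U_R^2}{\sqrt\alpha}+\sqrt\alpha\,U_\theta^2+\frac{e^{4U}}{4R^2}\Big(\frac{A_R^2}{\sqrt\alpha}+\sqrt\alpha\,A_\theta^2\Big)$ and $\mathcal{E}(R)=\int_{S^1}h\,d\theta$. *)

From Stdlib Require Import Reals List.
From Coquelicot Require Import Coquelicot.
Open Scope R_scope.

(* Functions of (theta, R) are represented as  f : R -> R -> R,  f theta r. *)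

Definition dR (f : R -> R -> R) : R -> R -> R :=
  fun t r => Derive (fun r' => f t r') r.
Definition dT (f : R -> R -> R) : R -> R -> R :=
  fun t r => Derive (fun t' => f t' r) t.

Fixpoint pd (ds : list bool) (f : R -> R -> R) : R -> R -> R :=
  match ds with
  | nil => f
  | d :: ds' => if d then dR (pd ds' f) else dT (pd ds' f)
  end.

Definition smooth_on (D : R -> R -> Prop) (f : R -> R -> R) : Prop :=
  forall (ds : list bool) (t r : R), D t r ->
    ex_derive (fun r' => pd ds f t r') r /\
    ex_derive (fun t' => pd ds f t' r) t /\
    continuous (fun p : R * R => pd ds f (fst p) (snd p)) (t, r).

(* periodic in theta, theta in S^1 = R/Z *)
Definition periodic1 (f : R -> R -> R) : Prop :=
  forall t r, f (t + 1) r = f t r.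

Definition beta (nu alpha : R -> R -> R) : R -> R -> R :=
  fun t r => nu t r + / 2 * ln (alpha t r).

Definition hdens (alpha U A : R -> R -> R) (t r : R) : R :=
  (dR U t r) ^ 2 / sqrt (alpha t r) + sqrt (alpha t r) * (dT U t r) ^ 2
  + exp (4 * U t r) / (4 * r ^ 2) *
    ((dR A t r) ^ 2 / sqrt (alpha t r) + sqrt (alpha t r) * (dT A t r) ^ 2).

Definition Energy (alpha U A : R -> R -> R) (r : R) : R :=
  RInt (fun t => hdens alpha U A t r) 0 1.

Definition Etilde (alpha nu U A : R -> R -> R) (K r : R) : R :=
  Energy alpha U A r
  + RInt (fun t => exp (2 * beta nu alpha t r) * K ^ 2
                   / (4 * sqrt (alpha t r) * r ^ 4)) 0 1.

(* the vacuum T^2-symmetric Einstein equations in areal coordinates, at (t,r) *)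
Definition vacuum_eqs (alpha nu U A G H : R -> R -> R) (K t r : R) : Prop :=
  let b := beta nu alpha in
  dR b t r = sqrt (alpha t r) * r * hdens alpha U A t r
             - exp (2 * b t r) * K ^ 2 / (4 * r ^ 3) /\
  dT b t r = 2 * r * (dR U t r * dT U t r
             + exp (4 * U t r) / (4 * r ^ 2) * dR A t r * dT A t r) /\
  dR alpha t r = - (alpha t r * exp (2 * b t r) * K ^ 2 / r ^ 3) /\
  dR (dR U) t r - alpha t r * dT (dT U) t r =
    - (dR U t r / r) + dR alpha t r * dR U t r / (2 * alpha t r)
    + dT alpha t r * dT U t r / 2
    + exp (4 * U t r) / (2 * r ^ 2) * ((dR A t r) ^ 2 - alpha t r * (dT A t r) ^ 2) /\
  dR (dR A) t r - alpha t r * dT (dT A) t r =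
    dR A t r / r + dR alpha t r * dR A t r / (2 * alpha t r)
    + dT alpha t r * dT A t r / 2
    - 4 * dR A t r * dR U t r + 4 * alpha t r * dT A t r * dT U t r /\
  dR G t r = - (A t r * dR H t r) /\
  dR H t r = exp (2 * b t r) * K / (sqrt (alpha t r) * r ^ 3).

(* The vacuum equations turn the R-derivative of the modified energy density
   h~ = h + e^(2 beta) K^2 / (4 sqrt(alpha) R^4) into a theta-divergence minus a
   nonnegative dissipation D:
     d_R h~ = d_theta (2 sqrt(alpha) U_theta U_R + e^(4U) sqrt(alpha) A_theta A_R / (2 R^2)) - D,
   using the wave equations for U and A to eliminate U_RR and A_RR, the equations
   for beta_R and alpha_R, and the symmetry of mixed partials.  Integrating over
   the circle, the divergence drops out by periodicity, so dE~/dR = - int D <= 0.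
   Pointwise R D <= 4 h~, hence d(R^4 E~)/dR = R^3 (4 E~ - R int D) >= 0 and
   R^4 E~ is nondecreasing. *)

From Stdlib Require Import Reals Lra Classical ClassicalEpsilon.
From Coquelicot Require Import Coquelicot.
Open Scope R_scope.

Definition continuous2 (f : R -> R -> R) (t r : R) : Prop :=
  continuous (fun p : R * R => f (fst p) (snd p)) (t, r).

Section Continuous2.

Variables (t r : R).

Lemma continuous2_const (c : R) : continuous2 (fun _ _ => c) t r.
Proof. apply continuous_const. Qed.

Lemma continuous2_snd : continuous2 (fun _ r => r) t r.
Proof. apply continuous_snd. Qed.

Lemma continuous2_plus (f g : R -> R -> R) :
  continuous2 f t r -> continuous2 g t r -> continuous2 (fun t r => f t r + g t r) t r.
Proof. apply (continuous_plus (fun p : R * R => f (fst p) (snd p))). Qed.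

Lemma continuous2_opp (f : R -> R -> R) :
  continuous2 f t r -> continuous2 (fun t r => - f t r) t r.
Proof. apply (continuous_opp (fun p : R * R => f (fst p) (snd p))). Qed.

Lemma continuous2_minus (f g : R -> R -> R) :
  continuous2 f t r -> continuous2 g t r -> continuous2 (fun t r => f t r - g t r) t r.
Proof. intros Hf Hg. apply (continuous2_plus f (fun t r => - g t r)), continuous2_opp; auto. Qed.

Lemma continuous2_mult (f g : R -> R -> R) :
  continuous2 f t r -> continuous2 g t r -> continuous2 (fun t r => f t r * g t r) t r.
Proof. apply (continuous_mult (fun p : R * R => f (fst p) (snd p))). Qed.

Lemma continuous2_comp (h : R -> R) (f : R -> R -> R) :
  continuous2 f t r -> continuous h (f t r) -> continuous2 (fun t r => h (f t r)) t r.
Proof. apply (continuous_comp (fun p : R * R => f (fst p) (snd p))). Qed.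

Lemma continuous2_div (f g : R -> R -> R) :
  continuous2 f t r -> continuous2 g t r -> g t r <> 0 ->
  continuous2 (fun t r => f t r / g t r) t r.
Proof.
  intros Hf Hg Hg0. apply (continuous2_mult f (fun t r => / g t r)); auto.
  apply (continuous2_comp Rinv g); auto. apply continuous_Rinv; auto.
Qed.

Lemma continuous2_pow (f : R -> R -> R) (n : nat) :
  continuous2 f t r -> continuous2 (fun t r => f t r ^ n) t r.
Proof.
  intros Hf. induction n as [|n IH]; simpl.
  - apply continuous2_const.
  - apply (continuous2_mult f (fun t r => f t r ^ n)); auto.
Qed.

Lemma continuous2_fst_section (f : R -> R -> R) :
  continuous2 f t r -> continuous (fun t => f t r) t.
Proof.
  intros Hf. apply (continuous_comp_2 (fun t => t) (fun _ => r) f); auto.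
  - apply continuous_id.
  - apply continuous_const.
Qed.

Lemma continuous2_locally_pos (f : R -> R -> R) :
  continuous2 f t r -> 0 < f t r -> locally (t, r) (fun p : R * R => 0 < f (fst p) (snd p)).
Proof.
  intros Hf Hpos. apply (Hf (fun y => 0 < y)).
  exists (mkposreal _ Hpos). intros y Hy. change (Rabs (y - f t r) < f t r) in Hy.
  apply Rabs_def2 in Hy. lra.
Qed.

End Continuous2.

(* Compactness of [a, b] makes the neighbourhood radius uniform in [t]. *)
Lemma continuous2_pos_near_segment (f : R -> R -> R) (a b r0 : R) :
  (forall t, a <= t <= b -> continuous2 f t r0 /\ 0 < f t r0) ->
  locally r0 (fun r => forall t, a <= t <= b -> 0 < f t r).
Proof.
  intros Hf.
  assert (Hrad : forall t, {d : posreal | a <= t <= b ->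
             forall u v, Rabs (u - t) < d -> Rabs (v - r0) < d -> 0 < f u v}).
  { intros t. apply constructive_indefinite_description.
    destruct (classic (a <= t <= b)) as [Ht | Ht].
    - destruct (Hf t Ht) as [Hc Hpos].
      destruct (proj2 (locally_2d_locally (fun u v => 0 < f u v) t r0)
                  (continuous2_locally_pos t r0 f Hc Hpos)) as [d Hd].
      exists d. intros _. exact Hd.
    - exists (mkposreal 1 Rlt_0_1). intros Hab. contradiction. }
  destruct (compactness_value_1d a b (fun t => proj1_sig (Hrad t))) as [d Hd].
  exists d. intros r Hr t Ht.
  apply Rnot_le_lt. intros Hle. apply (Hd t Ht). intros [t' [Ht' [Htt' Hdd]]].
  assert (0 < f t r).
  { apply (proj2_sig (Hrad t') Ht'); [exact Htt'|].
    change (Rabs (r - r0) < d) in Hr. lra. }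
  lra.
Qed.

Section Smooth.

Variables (D : R -> R -> Prop) (f : R -> R -> R).
Hypothesis Hf : smooth_on D f.

Lemma smooth_on_is_derive_R (ds : list bool) (t r : R) :
  D t r -> is_derive (fun r' => pd ds f t r') r (pd (true :: ds) f t r).
Proof. intros Hd. apply Derive_correct, (Hf ds t r Hd). Qed.

Lemma smooth_on_is_derive_T (ds : list bool) (t r : R) :
  D t r -> is_derive (fun t' => pd ds f t' r) t (pd (false :: ds) f t r).
Proof. intros Hd. apply Derive_correct, (Hf ds t r Hd). Qed.

Lemma smooth_on_continuous2 (ds : list bool) (t r : R) :
  D t r -> continuous2 (pd ds f) t r.
Proof. intros Hd. apply (Hf ds t r Hd). Qed.

Lemma smooth_on_dR_dT (t r : R) :
  locally (t, r) (fun p : R * R => D (fst p) (snd p)) ->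
  dR (dT f) t r = dT (dR f) t r.
Proof.
  intros HD. symmetry. apply (Schwarz f t r).
  - apply (proj2 (locally_2d_locally _ t r)). revert HD. apply filter_imp.
    intros [u v] Huv. repeat split; eexists.
    + exact (smooth_on_is_derive_T nil u v Huv).
    + exact (smooth_on_is_derive_R nil u v Huv).
    + exact (smooth_on_is_derive_T (true :: nil) u v Huv).
    + exact (smooth_on_is_derive_R (false :: nil) u v Huv).
  - apply continuity_2d_pt_filterlim.
    exact (smooth_on_continuous2 (false :: true :: nil) t r (locally_singleton _ _ HD)).
  - apply continuity_2d_pt_filterlim.
    exact (smooth_on_continuous2 (true :: false :: nil) t r (locally_singleton _ _ HD)).
Qed.

End Smooth.

Lemma periodic1_dR (f : R -> R -> R) : periodic1 f -> periodic1 (dR f).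
Proof. intros Hf t r. apply Derive_ext. intros r'. apply Hf. Qed.

Lemma periodic1_dT (f : R -> R -> R) : periodic1 f -> periodic1 (dT f).
Proof.
  intros Hf t r. unfold dT, Derive. f_equal. apply Lim_ext. intros h.
  replace (t + 1 + h) with ((t + h) + 1) by ring. rewrite !Hf. reflexivity.
Qed.

Lemma periodic1_0 (f : R -> R -> R) (r : R) : periodic1 f -> f 1 r = f 0 r.
Proof. intros Hf. rewrite <- (Hf 0 r), Rplus_0_l. reflexivity. Qed.

Lemma is_derive_RInt_param_open (W : R -> R -> Prop) (f df : R -> R -> R) (a b x : R) :
  a <= b ->
  (forall t r, W t r -> locally (t, r) (fun p : R * R => W (fst p) (snd p))) ->
  (forall t r, W t r -> is_derive (fun z => f t z) r (df t r)) ->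
  (forall t r, W t r -> continuous2 f t r /\ continuous2 df t r) ->
  locally x (fun r => forall t, a <= t <= b -> W t r) ->
  is_derive (fun r => RInt (fun t => f t r) a b) x (RInt (fun t => df t x) a b).
Proof.
  intros Hab HWopen Hder Hcont HWx.
  rewrite (RInt_ext (fun t => df t x) (fun t => Derive (fun u => f t u) x)).
  2:{ intros t Ht. rewrite Rmin_left, Rmax_right in Ht by exact Hab.
      symmetry. apply is_derive_unique, Hder, (locally_singleton _ _ HWx). lra. }
  apply (is_derive_RInt_param (fun u t => f t u)); rewrite ?Rmin_left, ?Rmax_right by exact Hab.
  - revert HWx. apply filter_imp. intros r HW t Ht. eexists. apply Hder, HW, Ht.
  - intros t Ht. apply continuity_2d_pt_filterlim.
    assert (HW : W t x) by exact (locally_singleton _ _ HWx t Ht).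
    apply (continuous_comp_2 snd fst (fun t r => Derive (fun z => f t z) r) (x, t));
      [apply continuous_snd | apply continuous_fst |].
    apply (continuous_ext_loc _ (fun p : R * R => df (fst p) (snd p))).
    + generalize (HWopen t x HW). apply filter_imp.
      intros p Hp. symmetry. apply is_derive_unique, Hder, Hp.
    + apply (Hcont t x HW).
  - revert HWx. apply filter_imp. intros r HW.
    apply (@ex_RInt_continuous R_CompleteNormedModule). intros t Ht.
    rewrite Rmin_left, Rmax_right in Ht by exact Hab.
    apply continuous2_fst_section, Hcont, HW, Ht.
Qed.

Lemma RInt_derive_eq_0 (f df : R -> R) (a b : R) :
  a <= b ->
  (forall t, a <= t <= b -> is_derive f t (df t)) ->
  (forall t, a <= t <= b -> continuous df t) ->
  f b = f a -> RInt df a b = 0.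
Proof.
  intros Hab Hder Hcont Hper.
  rewrite (@is_RInt_unique R_CompleteNormedModule df a b (minus (f b) (f a))).
  - rewrite Hper. apply Rminus_diag.
  - apply (@is_RInt_derive R_CompleteNormedModule); rewrite Rmin_left, Rmax_right by exact Hab; assumption.
Qed.

(* [x ^ n * E x] is nondecreasing, its derivative being [x ^ (n-1) * (n E + x E')]. *)
Lemma le_mul_pow_of_derive (E dE : R -> R) (n : nat) (y z : R) :
  0 < y <= z ->
  (forall x, y <= x <= z -> is_derive E x (dE x)) ->
  (forall x, y <= x <= z -> 0 <= x * dE x + INR n * E x) ->
  E y <= E z * (z / y) ^ n.
Proof.
  intros Hyz Hder Hineq.
  set (g := fun x => x ^ n * E x).
  set (dg := fun x => INR n * x ^ pred n * E x + x ^ n * dE x).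
  assert (Hg : forall x, y <= x <= z -> is_derive g x (dg x)).
  { intros x Hx. unfold g, dg. auto_derive.
    - eexists. apply Hder, Hx.
    - replace (Derive (fun x => E x) x) with (dE x) by (symmetry; apply is_derive_unique, Hder, Hx).
      ring. }
  assert (Hdg : forall x, y <= x <= z -> 0 <= dg x).
  { intros x Hx. specialize (Hineq x Hx). unfold dg.
    destruct n as [|m].
    - simpl in *. nra.
    - replace (INR (S m) * x ^ pred (S m) * E x + x ^ S m * dE x)
        with (x ^ m * (x * dE x + INR (S m) * E x)) by (change (pred (S m)) with m; rewrite <- tech_pow_Rmult; ring).
      apply Rmult_le_pos; [apply pow_le; lra | exact Hineq]. }
  assert (Hmono : g y <= g z).
  { destruct (MVT_gen g y z dg) as [c [Hc Hmvt]];
      rewrite ?Rmin_left, ?Rmax_right in * by lra.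
    - intros x Hx. apply Hg. lra.
    - intros x Hx. apply continuity_pt_filterlim, (@ex_derive_continuous R_AbsRing R_NormedModule).
      eexists. apply Hg, Hx.
    - pose proof (Hdg c Hc). nra. }
  unfold g in Hmono.
  assert (Hyn : 0 < y ^ n) by (apply pow_lt; lra).
  apply (Rmult_le_reg_l (y ^ n) _ _ Hyn).
  unfold Rdiv. rewrite Rpow_mult_distr, pow_inv.
  replace (y ^ n * (E z * (z ^ n * / y ^ n))) with (z ^ n * E z) by (field; lra).
  exact Hmono.
Qed.

Definition twist_dens (alpha nu : R -> R -> R) (K t r : R) : R :=
  exp (2 * beta nu alpha t r) * K ^ 2 / (4 * sqrt (alpha t r) * r ^ 4).

Definition htilde (alpha nu U A : R -> R -> R) (K t r : R) : R :=
  hdens alpha U A t r + twist_dens alpha nu K t r.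

Definition dissip (alpha nu U A : R -> R -> R) (K t r : R) : R :=
  exp (2 * beta nu alpha t r) * K ^ 2 / (sqrt (alpha t r) * r ^ 5)
  + 2 * (dR U t r) ^ 2 / (sqrt (alpha t r) * r)
  + sqrt (alpha t r) * exp (4 * U t r) * (dT A t r) ^ 2 / (2 * r ^ 3).

Definition flux (alpha U A : R -> R -> R) (t r : R) : R :=
  2 * sqrt (alpha t r) * dT U t r * dR U t r
  + exp (4 * U t r) * sqrt (alpha t r) * dT A t r * dR A t r / (2 * r ^ 2).

(* Explicit forms of d_R h~ and d_theta flux: their joint continuity is needed to
   differentiate under the integral sign and to integrate d_theta flux. *)
Definition htilde_dR (alpha nu U A : R -> R -> R) (K t r : R) : R :=
  let s := sqrt (alpha t r) in
  let s_R := dR alpha t r / (2 * s) in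
  let e := exp (4 * U t r) / (4 * r ^ 2) in
  2 * dR U t r * dR (dR U) t r / s - dR U t r ^ 2 * s_R / s ^ 2
  + s_R * dT U t r ^ 2 + 2 * s * dT U t r * dR (dT U) t r
  + e * (4 * dR U t r - 2 / r) * (dR A t r ^ 2 / s + s * dT A t r ^ 2)
  + e * (2 * dR A t r * dR (dR A) t r / s - dR A t r ^ 2 * s_R / s ^ 2
         + s_R * dT A t r ^ 2 + 2 * s * dT A t r * dR (dT A) t r)
  + twist_dens alpha nu K t r * (2 * (dR nu t r + dR alpha t r / (2 * alpha t r)) - s_R / s - 4 / r).

Definition flux_dT (alpha U A : R -> R -> R) (t r : R) : R :=
  let s := sqrt (alpha t r) in
  let s_T := dT alpha t r / (2 * s) in
  2 * s_T * dT U t r * dR U t r + 2 * s * dT (dT U) t r * dR U t r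
  + 2 * s * dT U t r * dT (dR U) t r
  + exp (4 * U t r) / (2 * r ^ 2)
    * (4 * dT U t r * s * dT A t r * dR A t r + s_T * dT A t r * dR A t r
       + s * dT (dT A) t r * dR A t r + s * dT A t r * dT (dR A) t r).

Ltac positivity :=
  repeat first
    [ assumption | apply Rgt_not_eq | apply Rmult_lt_0_compat | apply pow_lt
    | apply sqrt_lt_R0 | apply exp_pos | lra ].

Lemma dissip_nonneg (alpha nu U A : R -> R -> R) (K t r : R) :
  0 < alpha t r -> 0 < r -> 0 <= dissip alpha nu U A K t r.
Proof.
  intros Hpos Hr. assert (0 < sqrt (alpha t r)) by (apply sqrt_lt_R0, Hpos).
  unfold dissip.
  repeat first [ apply pow2_ge_0 | apply Rplus_le_le_0_compat | apply Rdiv_le_0_compat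
               | apply Rmult_le_pos | left; apply exp_pos | lra | positivity ].
Qed.

Lemma dissip_le_htilde (alpha nu U A : R -> R -> R) (K t r : R) :
  0 < alpha t r -> 0 < r -> r * dissip alpha nu U A K t r <= 4 * htilde alpha nu U A K t r.
Proof.
  intros Hpos Hr. assert (Hs : 0 < sqrt (alpha t r)) by (apply sqrt_lt_R0, Hpos).
  unfold dissip, htilde, hdens, twist_dens.
  apply Rminus_le_0.
  replace (4 * _ - _) with
    (2 * dR U t r ^ 2 / sqrt (alpha t r) + 4 * sqrt (alpha t r) * dT U t r ^ 2
     + exp (4 * U t r) * dR A t r ^ 2 / (r ^ 2 * sqrt (alpha t r))
     + exp (4 * U t r) * sqrt (alpha t r) * dT A t r ^ 2 / (2 * r ^ 2))
    by (field; split; positivity).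
  repeat first [ apply pow2_ge_0 | apply Rplus_le_le_0_compat | apply Rdiv_le_0_compat
               | apply Rmult_le_pos | left; apply exp_pos | lra | positivity ].
Qed.

(* [pd_path] and [pd_root] read a term [dR (dT f)] back as [pd [true; false] f]. *)
Ltac pd_path g :=
  lazymatch g with
  | dR ?h => let l := pd_path h in constr:(cons true l)
  | dT ?h => let l := pd_path h in constr:(cons false l)
  | _ => constr:(@nil bool)
  end.

Ltac pd_root g :=
  lazymatch g with
  | dR ?h => pd_root h
  | dT ?h => pd_root h
  | _ => g
  end.

Ltac continuous2_pd g :=
  let ds := pd_path g in
  let f := pd_root g in
  match goal with
  | Hf : smooth_on ?D f |- _ => apply (smooth_on_continuous2 D f Hf ds); assumption
  end.

Ltac continuous2_tac :=
  repeat match goal with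
  | |- continuous2 (fun _ _ => ?c) _ _ => apply continuous2_const
  | |- continuous2 (fun _ r => r) _ _ => apply continuous2_snd
  | |- continuous2 (fun _ _ => _ + _) _ _ => apply continuous2_plus
  | |- continuous2 (fun _ _ => _ - _) _ _ => apply continuous2_minus
  | |- continuous2 (fun _ _ => _ * _) _ _ => apply continuous2_mult
  | |- continuous2 (fun _ _ => _ / _) _ _ => apply continuous2_div
  | |- continuous2 (fun _ _ => - _) _ _ => apply continuous2_opp
  | |- continuous2 (fun _ _ => _ ^ _) _ _ => apply continuous2_pow
  | |- continuous2 (fun _ _ => exp _) _ _ =>
      apply (continuous2_comp _ _ exp); [|apply continuous_exp]
  | |- continuous2 (fun _ _ => sqrt _) _ _ =>
      apply (continuous2_comp _ _ sqrt); [|apply continuous_sqrt]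
  | |- continuous2 (fun _ _ => ln _) _ _ =>
      apply (continuous2_comp _ _ ln); [|apply continuous_ln]
  | |- continuous2 (fun t r => ?g t r) _ _ => continuous2_pd g
  | |- continuous2 ?g _ _ => continuous2_pd g
  end.

Ltac ex_derive_pd :=
  match goal with
  | |- ex_derive (fun x => ?g ?t x) ?r =>
      let ds := pd_path g in let f := pd_root g in
      match goal with
      | Hf : smooth_on ?D f |- _ => eexists; apply (smooth_on_is_derive_R D f Hf ds); assumption
      end
  | |- ex_derive (fun x => ?g x ?r) ?t =>
      let ds := pd_path g in let f := pd_root g in
      match goal with
      | Hf : smooth_on ?D f |- _ => eexists; apply (smooth_on_is_derive_T D f Hf ds); assumption
      end
  end.

Section ModifiedEnergy.

Variables (Rs Ri Rb K : R) (alpha nu U A G H : R -> R -> R).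

Let strip (t r : R) : Prop := Rs < r < Rb.
Let W (t r : R) : Prop := strip t r /\ 0 < alpha t r.

Hypothesis HRs : 0 < Rs.
Hypothesis HRib : Ri < Rb.
Hypothesis Hsm_alpha : smooth_on strip alpha.
Hypothesis Hsm_nu : smooth_on strip nu.
Hypothesis Hsm_U : smooth_on strip U.
Hypothesis Hsm_A : smooth_on strip A.
Hypothesis Hper_alpha : periodic1 alpha.
Hypothesis Hper_U : periodic1 U.
Hypothesis Hper_A : periodic1 A.
Hypothesis Halpha : forall t r, Rs < r <= Ri -> 0 < alpha t r.
Hypothesis Heqs : forall t r, Rs < r <= Ri -> vacuum_eqs alpha nu U A G H K t r.

Lemma W_of_le (t r : R) : Rs < r <= Ri -> W t r.
Proof. intros Hr. split; [unfold strip; lra | apply Halpha, Hr]. Qed.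

Lemma W_open (t r : R) : W t r -> locally (t, r) (fun p : R * R => W (fst p) (snd p)).
Proof.
  intros [Hr Hpos].
  assert (Hlo : continuous2 (fun _ r => r - Rs) t r) by continuous2_tac.
  assert (Hhi : continuous2 (fun _ r => Rb - r) t r) by continuous2_tac.
  assert (Hal : continuous2 alpha t r) by continuous2_tac.
  unfold strip in Hr.
  pose proof (continuous2_locally_pos _ _ _ Hlo ltac:(lra)) as Nlo.
  pose proof (continuous2_locally_pos _ _ _ Hhi ltac:(lra)) as Nhi.
  pose proof (continuous2_locally_pos _ _ _ Hal Hpos) as Nal.
  generalize (filter_and _ _ (filter_and _ _ Nlo Nhi) Nal). apply filter_imp.
  intros p [[Hp1 Hp2] Hp3]. split; [split|]; simpl in *; lra.
Qed.

Lemma W_near_segment (r0 : R) :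
  Rs < r0 <= Ri -> locally r0 (fun r => forall t, 0 <= t <= 1 -> W t r).
Proof.
  intros Hr0.
  assert (Hstrip : locally r0 (fun r => Rs < r < Rb)).
  { apply (locally_interval _ r0 Rs Rb); simpl; intros; lra. }
  assert (Hpos : locally r0 (fun r => forall t, 0 <= t <= 1 -> 0 < alpha t r)).
  { apply continuous2_pos_near_segment. intros t Ht. split.
    - assert (strip t r0) by (unfold strip; lra). continuous2_tac.
    - apply Halpha. lra. }
  generalize (filter_and _ _ Hstrip Hpos). apply filter_imp.
  intros r [Hr Hal] t Ht. split; [exact Hr | apply Hal, Ht].
Qed.

Lemma htilde_is_derive_R (t r : R) :
  W t r -> is_derive (fun z => htilde alpha nu U A K t z) r (htilde_dR alpha nu U A K t r).
Proof.
  intros [Hr Hpos]. unfold strip in Hr.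
  assert (Hs : 0 < sqrt (alpha t r)) by (apply sqrt_lt_R0, Hpos).
  unfold htilde_dR, htilde, hdens, twist_dens, beta. cbv zeta. auto_derive.
  - repeat split; try ex_derive_pd; positivity.
  - unfold dR. field. split; positivity.
Qed.

Lemma flux_is_derive_T (t r : R) :
  W t r -> is_derive (fun t' => flux alpha U A t' r) t (flux_dT alpha U A t r).
Proof.
  intros [Hr Hpos]. unfold strip in Hr.
  assert (Hs : 0 < sqrt (alpha t r)) by (apply sqrt_lt_R0, Hpos).
  unfold flux, flux_dT. cbv zeta. auto_derive.
  - repeat split; try ex_derive_pd; positivity.
  - unfold dT. field. split; positivity.
Qed.

Lemma beta_is_derive_R (t r : R) :
  W t r -> is_derive (fun z => beta nu alpha t z) r (dR nu t r + dR alpha t r / (2 * alpha t r)).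
Proof.
  intros [Hr Hpos]. unfold beta. auto_derive.
  - repeat split; try ex_derive_pd; positivity.
  - unfold dR. field. positivity.
Qed.

Ltac W_continuity :=
  intros [Hr Hpos]; unfold strip in Hr;
  assert (0 < sqrt (alpha _ _)) by (apply sqrt_lt_R0, Hpos);
  cbv zeta; continuous2_tac; cbv beta; positivity.

Lemma hdens_continuous2 (t r : R) : W t r -> continuous2 (hdens alpha U A) t r.
Proof. unfold hdens. W_continuity. Qed.

Lemma twist_dens_continuous2 (t r : R) : W t r -> continuous2 (twist_dens alpha nu K) t r.
Proof. unfold twist_dens, beta. W_continuity. Qed.

Lemma htilde_continuous2 (t r : R) : W t r -> continuous2 (htilde alpha nu U A K) t r.
Proof.
  intros HW. apply continuous2_plus; [apply hdens_continuous2 | apply twist_dens_continuous2]; exact HW.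
Qed.

Lemma htilde_dR_continuous2 (t r : R) : W t r -> continuous2 (htilde_dR alpha nu U A K) t r.
Proof. unfold htilde_dR, twist_dens, beta. W_continuity. Qed.

Lemma flux_dT_continuous2 (t r : R) : W t r -> continuous2 (flux_dT alpha U A) t r.
Proof. unfold flux_dT. W_continuity. Qed.

Lemma dissip_continuous2 (t r : R) : W t r -> continuous2 (dissip alpha nu U A K) t r.
Proof. unfold dissip, beta. W_continuity. Qed.

Lemma htilde_dR_eq (t r : R) :
  Rs < r <= Ri ->
  htilde_dR alpha nu U A K t r = flux_dT alpha U A t r - dissip alpha nu U A K t r.
Proof.
  intros Hr.
  assert (HW : W t r) by (apply W_of_le, Hr).
  assert (Hstrip : locally (t, r) (fun p : R * R => strip (fst p) (snd p))).
  { generalize (W_open t r HW). apply filter_imp. intros p [Hp _]. exact Hp. }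
  assert (Hpos : 0 < alpha t r) by (apply Halpha, Hr).
  destruct (Heqs t r Hr) as [Eb [_ [Ea [EU [EA _]]]]].
  rewrite (is_derive_unique _ _ _ (beta_is_derive_R t r HW) : dR (beta nu alpha) t r = _) in Eb.
  unfold htilde_dR, flux_dT, dissip. cbv zeta.
  rewrite (smooth_on_dR_dT _ U Hsm_U t r Hstrip), (smooth_on_dR_dT _ A Hsm_A t r Hstrip).
  replace (dR (dR U) t r)
    with ((dR (dR U) t r - alpha t r * dT (dT U) t r) + alpha t r * dT (dT U) t r) by ring.
  replace (dR (dR A) t r)
    with ((dR (dR A) t r - alpha t r * dT (dT A) t r) + alpha t r * dT (dT A) t r) by ring.
  rewrite Eb, EU, EA, Ea.
  unfold hdens, twist_dens.
  assert (Hs : 0 < sqrt (alpha t r)) by (apply sqrt_lt_R0, Hpos).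
  assert (Hsq : alpha t r = sqrt (alpha t r) * sqrt (alpha t r)) by (rewrite sqrt_sqrt; lra).
  set (s := sqrt (alpha t r)) in *. clearbody s. rewrite Hsq.
  field. split; positivity.
Qed.

Lemma ex_RInt_W (f : R -> R -> R) (r : R) :
  (forall t r, W t r -> continuous2 f t r) ->
  (forall t, 0 <= t <= 1 -> W t r) -> ex_RInt (fun t => f t r) 0 1.
Proof.
  intros Hf HW. apply (@ex_RInt_continuous R_CompleteNormedModule). intros t Ht.
  rewrite Rmin_left, Rmax_right in Ht by lra.
  apply continuous2_fst_section, Hf, HW, Ht.
Qed.

Lemma flux_periodic : periodic1 (flux alpha U A).
Proof.
  intros t r. unfold flux.
  rewrite Hper_alpha, Hper_U, (periodic1_dT U Hper_U), (periodic1_dR U Hper_U),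
    (periodic1_dT A Hper_A), (periodic1_dR A Hper_A).
  reflexivity.
Qed.

Lemma RInt_flux_dT (r : R) : Rs < r <= Ri -> RInt (fun t => flux_dT alpha U A t r) 0 1 = 0.
Proof.
  intros Hr. apply (RInt_derive_eq_0 (fun t => flux alpha U A t r)); [lra | | |].
  - intros t _. apply flux_is_derive_T, W_of_le, Hr.
  - intros t _. apply continuous2_fst_section, flux_dT_continuous2, W_of_le, Hr.
  - apply periodic1_0, flux_periodic.
Qed.

Lemma Etilde_eq_RInt (r : R) :
  (forall t, 0 <= t <= 1 -> W t r) ->
  Etilde alpha nu U A K r = RInt (fun t => htilde alpha nu U A K t r) 0 1.
Proof.
  intros HW. symmetry.
  exact (RInt_plus _ _ 0 1 (ex_RInt_W _ r hdens_continuous2 HW)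
                           (ex_RInt_W _ r twist_dens_continuous2 HW)).
Qed.

Lemma Etilde_is_derive (r : R) :
  Rs < r <= Ri ->
  is_derive (Etilde alpha nu U A K) r (- RInt (fun t => dissip alpha nu U A K t r) 0 1).
Proof.
  intros Hr. pose proof (W_near_segment r Hr) as HW.
  apply (is_derive_ext_loc (fun z => RInt (fun t => htilde alpha nu U A K t z) 0 1)).
  { revert HW. apply filter_imp. intros z Hz. symmetry. apply Etilde_eq_RInt, Hz. }
  replace (- RInt (fun t => dissip alpha nu U A K t r) 0 1)
    with (RInt (fun t => htilde_dR alpha nu U A K t r) 0 1).
  { apply (is_derive_RInt_param_open W); [lra | exact W_open | exact htilde_is_derive_R | | exact HW].
    intros t z Hz. split; [apply htilde_continuous2, Hz | apply htilde_dR_continuous2, Hz]. }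
  rewrite (RInt_ext _ (fun t => minus (flux_dT alpha U A t r) (dissip alpha nu U A K t r)))
    by (intros t _; apply htilde_dR_eq, Hr).
  assert (HWr : forall t, 0 <= t <= 1 -> W t r) by (intros t _; apply W_of_le, Hr).
  rewrite (@RInt_minus R_CompleteNormedModule), (RInt_flux_dT r Hr).
  - unfold minus, plus, opp. simpl. ring.
  - exact (ex_RInt_W _ r flux_dT_continuous2 HWr).
  - exact (ex_RInt_W _ r dissip_continuous2 HWr).
Qed.

Lemma RInt_dissip_nonneg (r : R) :
  Rs < r <= Ri -> 0 <= RInt (fun t => dissip alpha nu U A K t r) 0 1.
Proof.
  intros Hr. apply RInt_ge_0; [lra | |].
  - apply ex_RInt_W; [exact dissip_continuous2 | intros t _; apply W_of_le, Hr].
  - intros t _. apply dissip_nonneg; [apply Halpha, Hr | lra].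
Qed.

Lemma RInt_dissip_le_Etilde (r : R) :
  Rs < r <= Ri -> r * RInt (fun t => dissip alpha nu U A K t r) 0 1 <= 4 * Etilde alpha nu U A K r.
Proof.
  intros Hr.
  assert (HWr : forall t, 0 <= t <= 1 -> W t r) by (intros t _; apply W_of_le, Hr).
  rewrite (Etilde_eq_RInt r HWr).
  pose proof (RInt_correct _ _ _ (ex_RInt_W _ r htilde_continuous2 HWr)) as Ih.
  pose proof (RInt_correct _ _ _ (ex_RInt_W _ r dissip_continuous2 HWr)) as Id.
  pose proof (is_RInt_minus _ _ _ _ _ _ (is_RInt_scal _ _ _ 4 _ Ih) (is_RInt_scal _ _ _ r _ Id)) as J.
  apply Rminus_le_0, (is_RInt_ge_0 _ 0 1 _ ltac:(lra) J).
  intros t _. change (0 <= 4 * htilde alpha nu U A K t r - r * dissip alpha nu U A K t r).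
  pose proof (dissip_le_htilde alpha nu U A K t r (Halpha t r Hr) ltac:(lra)). lra.
Qed.

Lemma Etilde_scaled_le (Rk : R) :
  Rs < Rk <= Ri -> Etilde alpha nu U A K Rk <= Etilde alpha nu U A K Ri * (Ri / Rk) ^ 4.
Proof.
  intros HRk.
  apply (le_mul_pow_of_derive _ (fun x => - RInt (fun t => dissip alpha nu U A K t x) 0 1)); [lra | |].
  - intros x Hx. apply Etilde_is_derive. lra.
  - intros x Hx. pose proof (RInt_dissip_le_Etilde x ltac:(lra)).
    replace (INR 4) with 4 by (simpl; ring). lra.
Qed.

End ModifiedEnergy.

Theorem mainTheorem5
  (Rs Ri delta K : R) (alpha nu U A G H : R -> R -> R)
  (HRs : 0 < Rs) (HRsi : Rs < Ri) (Hdelta : 0 < delta) (HK : 0 <= K)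
  (Hsm_alpha : smooth_on (fun t r => Rs < r < Ri + delta) alpha)
  (Hsm_nu : smooth_on (fun t r => Rs < r < Ri + delta) nu)
  (Hsm_U : smooth_on (fun t r => Rs < r < Ri + delta) U)
  (Hsm_A : smooth_on (fun t r => Rs < r < Ri + delta) A)
  (Hsm_G : smooth_on (fun t r => Rs < r < Ri + delta) G)
  (Hsm_H : smooth_on (fun t r => Rs < r < Ri + delta) H)
  (Hper_alpha : periodic1 alpha) (Hper_nu : periodic1 nu) (Hper_U : periodic1 U)
  (Hper_A : periodic1 A) (Hper_G : periodic1 G) (Hper_H : periodic1 H)
  (Halpha : forall t r, Rs < r <= Ri -> 0 < alpha t r)
  (Heqs : forall t r, Rs < r <= Ri -> vacuum_eqs alpha nu U A G H K t r) :
  (forall r, Rs < r <= Ri ->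
     is_derive (fun s => Etilde alpha nu U A K s) r
       (- RInt (fun t =>
            exp (2 * beta nu alpha t r) * K ^ 2 / (sqrt (alpha t r) * r ^ 5)
            + 2 * (dR U t r) ^ 2 / (sqrt (alpha t r) * r)
            + sqrt (alpha t r) * exp (4 * U t r) * (dT A t r) ^ 2 / (2 * r ^ 3))
          0 1) /\
     - RInt (fun t =>
            exp (2 * beta nu alpha t r) * K ^ 2 / (sqrt (alpha t r) * r ^ 5)
            + 2 * (dR U t r) ^ 2 / (sqrt (alpha t r) * r)
            + sqrt (alpha t r) * exp (4 * U t r) * (dT A t r) ^ 2 / (2 * r ^ 3))
          0 1 <= 0)
  /\
  (forall Rk, Rs < Rk <= Ri ->
     Etilde alpha nu U A K Rk <= Etilde alpha nu U A K Ri * (Ri / Rk) ^ 4).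
Proof.
  split.
  - intros r Hr. split.
    + apply (Etilde_is_derive Rs Ri (Ri + delta) K alpha nu U A G H); auto; lra.
    + assert (0 <= RInt (fun t => dissip alpha nu U A K t r) 0 1).
      { apply (RInt_dissip_nonneg Rs Ri (Ri + delta)); auto; lra. }
      unfold dissip in *. lra.
  - intros Rk HRk. apply (Etilde_scaled_le Rs Ri (Ri + delta) K alpha nu U A G H); auto; lra.
Qed.
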